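(* Let $\alpha,\beta<1$ be real numbers (not necessarily positive). Let $A,B\subset\mathbb{N}$ be such that $A(X)\le C\frac{\sqrt{X}}{(\log X)^{\alpha}}$ and $B(X)\le C\frac{\sqrt{X}}{(\log X)^{\beta}}$ for some constant $C>0$ and all sufficiently large $X$. Then there is a constant $C'>0$ such that for all sufficiently large $X$, $$(AB)(X)\le \sum_{\substack{a\in A,\ b\in B\\ ab\le X}}1\le C'\sqrt{X}(\log X)^{1-\alpha-\beta}.$$
   Context: $\mathbb{N}$ is the set of positive integers; $AB=\{ab:a\in A,b\in B\}$; for $S\subset\mathbb{N}_0$, $S(X)=|S\cap[1,X]|$. *)

From Stdlib Require Import Reals Lra Lia List Arith Bool.
Open Scope bool_scope.
Open Scope R_scope.

(* Subsets of N_0 are represented by boolean predicates on nat. *)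

(* floor of a real number, as a nat (0 for negative inputs) *)
Definition fl (X : R) : nat := Z.to_nat (Int_part X).

Definition cnt (S : nat -> bool) (N : nat) : nat :=
  length (filter S (seq 1 N)).

Definition cntR (S : nat -> bool) (X : R) : nat := cnt S (fl X).

(* membership in the product set AB = {ab : a ∈ A, b ∈ B}, for m ≥ 1;
   for m ≥ 1 any factorisation m = a*b has 1 <= a, b <= m. *)
Definition prodset (A B : nat -> bool) (m : nat) : bool :=
  existsb (fun a => existsb (fun b => A a && B b && Nat.eqb (a * b) m)
                            (seq 1 m)) (seq 1 m).

Definition pairs (A B : nat -> bool) (N : nat) : nat :=
  length (filter (fun p => A (fst p) && B (snd p) && Nat.leb (fst p * snd p) N)
                 (list_prod (seq 1 N) (seq 1 N))).

Definition pairsR (A B : nat -> bool) (X : R) : nat := pairs A B (fl X).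

From Stdlib Require Import Reals Lra Lia List Arith Bool ZArith.
Open Scope R_scope.

(* Sorting the pairs (a, b) with ab <= N by the dyadic block 2^j <= a < 2^(j+1) of a gives
   pairs(N) <= sum_(j < M) A(2^(j+1)) B(2^(M-j)) with 2^(M-1) <= N < 2^M.  Evaluated at
   X = 2^i the hypotheses read A(2^i) << 2^(i/2) i^(-alpha), so the sum is
   << 2^(M/2) sum_(j < M) (j+1)^(-alpha) (M-j)^(-beta).  In each term one of the two factors
   has argument >= M/2 and is therefore comparable to its value at M; since alpha, beta < 1,
   sum_(k <= M) k^(-alpha) << M^(1-alpha), so the convolution is << M^(1-alpha-beta), and
   M ~ log X / log 2.  The first inequality holds because choosing one factorisation of each
   element of AB is injective. *)

Lemma exp_le x y : x <= y -> exp x <= exp y.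
Proof. intros [H|H]; [apply Rlt_le, exp_increasing, H | subst; lra]. Qed.

Lemma ln_le x y : 0 < x -> x <= y -> ln x <= ln y.
Proof. intros Hx [H|H]; [apply Rlt_le, ln_increasing; assumption | subst; lra]. Qed.

Lemma ln_le_sub1 x : 0 < x -> ln x <= x - 1.
Proof. intros Hx. pose proof (exp_ineq1_le (ln x)) as H. rewrite exp_ln in H; lra. Qed.

Lemma Rpower_pos x c : 0 < Rpower x c.
Proof. apply exp_pos. Qed.

Lemma Rpower_1_base c : Rpower 1 c = 1.
Proof. unfold Rpower. rewrite ln_1, Rmult_0_r. apply exp_0. Qed.

Lemma Rpower_comparable x y c : 0 < x -> 0 < y -> x <= 2 * y -> y <= 2 * x ->
  Rpower x c <= Rpower 2 (Rabs c) * Rpower y c.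
Proof.
  intros Hx Hy Hxy Hyx. unfold Rpower. rewrite <- exp_plus. apply exp_le.
  assert (Ex : ln x <= ln 2 + ln y) by (rewrite <- ln_mult by lra; apply ln_le; lra).
  assert (Ey : ln y <= ln 2 + ln x) by (rewrite <- ln_mult by lra; apply ln_le; lra).
  destruct (Rle_dec 0 c).
  - rewrite Rabs_right by lra. nra.
  - rewrite Rabs_left by lra. nra.
Qed.

(* (m/(m+1))^s <= exp (-s/(m+1)) <= (m+1)/(m+1+s) *)
Lemma Rpower_pred_le s m : 0 < s -> 0 < m ->
  Rpower m s <= Rpower (m + 1) s * ((m + 1) / (m + 1 + s)).
Proof.
  intros Hs Hm.
  assert (Hln : ln m <= ln (m + 1) - / (m + 1)).
  { assert (Hq : 0 < m / (m + 1)) by (apply Rdiv_lt_0_compat; lra).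
    pose proof (ln_le_sub1 _ Hq) as H.
    replace (ln m) with (ln (m / (m + 1)) + ln (m + 1))
      by (rewrite <- ln_mult by lra; f_equal; field; lra).
    replace (m / (m + 1) - 1) with (- / (m + 1)) in H by (field; lra). lra. }
  assert (Hexp : 1 + s * / (m + 1) <= exp (s * / (m + 1))) by apply exp_ineq1_le.
  assert (Hsm : 0 < s * / (m + 1)) by (apply Rmult_lt_0_compat; [lra | apply Rinv_0_lt_compat; lra]).
  unfold Rpower.
  apply Rle_trans with (exp (s * ln (m + 1)) * / exp (s * / (m + 1))).
  - rewrite <- exp_Ropp, <- exp_plus. apply exp_le. nra.
  - apply Rmult_le_compat_l; [apply Rlt_le, exp_pos|].
    replace ((m + 1) / (m + 1 + s)) with (/ (1 + s * / (m + 1))) by (field; lra).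
    apply Rinv_le_contravar; lra.
Qed.

Lemma Rpower_step_le a m : a < 1 -> 0 < m ->
  Rpower (m + 1) (- a) <= (1 + / (1 - a)) * (Rpower (m + 1) (1 - a) - Rpower m (1 - a)).
Proof.
  intros Ha Hm. set (s := 1 - a). assert (Hs : 0 < s) by (unfold s; lra).
  pose proof (Rpower_pred_le s m Hs Hm) as Hpred.
  set (P := Rpower (m + 1) s) in *. assert (HP : 0 < P) by apply Rpower_pos.
  replace (Rpower (m + 1) (- a)) with (P / (m + 1)).
  2:{ unfold P, s. replace (- a) with (1 - a + - (1)) by ring.
      rewrite Rpower_plus, Rpower_Ropp, Rpower_1 by lra. reflexivity. }
  apply Rle_trans with ((1 + / s) * (P * (s / (m + 1 + s)))).
  - replace ((1 + / s) * (P * (s / (m + 1 + s)))) with (P * ((s + 1) / (m + 1 + s)))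
      by (field; lra).
    unfold Rdiv. apply Rmult_le_compat_l; [lra|].
    apply (Rmult_le_reg_r ((m + 1) * (m + 1 + s))); [nra|].
    replace (/ (m + 1) * ((m + 1) * (m + 1 + s))) with (m + 1 + s) by (field; lra).
    replace ((s + 1) * / (m + 1 + s) * ((m + 1) * (m + 1 + s))) with ((s + 1) * (m + 1))
      by (field; lra).
    nra.
  - apply Rmult_le_compat_l; [pose proof (Rinv_0_lt_compat s Hs); lra|].
    replace (P * (s / (m + 1 + s))) with (P - P * ((m + 1) / (m + 1 + s))) by (field; lra).
    lra.
Qed.

Fixpoint Rsum (f : nat -> R) (l : list nat) : R :=
  match l with nil => 0 | x :: l => f x + Rsum f l end.

Lemma Rsum_app f l1 l2 : Rsum f (l1 ++ l2) = Rsum f l1 + Rsum f l2.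
Proof. induction l1 as [|x l1 IH]; simpl; [|rewrite IH]; lra. Qed.

Lemma Rsum_le f g l : (forall x, In x l -> f x <= g x) -> Rsum f l <= Rsum g l.
Proof.
  induction l as [|x l IH]; simpl; intros H; [lra|].
  apply Rplus_le_compat; [apply H | apply IH]; auto.
Qed.

Lemma Rsum_scal c f l : Rsum (fun x => c * f x) l = c * Rsum f l.
Proof. induction l as [|x l IH]; simpl; [|rewrite IH]; lra. Qed.

Lemma Rsum_plus f g l : Rsum (fun x => f x + g x) l = Rsum f l + Rsum g l.
Proof. induction l as [|x l IH]; simpl; [|rewrite IH]; lra. Qed.

Lemma Rsum_map_S f l : Rsum f (map S l) = Rsum (fun j => f (S j)) l.
Proof. induction l as [|x l IH]; simpl; [|rewrite IH]; lra. Qed.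

Lemma Rsum_rev h M :
  Rsum (fun j => h (M - j)%nat) (seq 0 M) = Rsum (fun j => h (S j)) (seq 0 M).
Proof.
  induction M as [|M IH]; [reflexivity|].
  rewrite <- cons_seq, <- seq_shift. simpl Rsum at 1. rewrite Rsum_map_S, IH.
  rewrite seq_shift, cons_seq, seq_S, Rsum_app. simpl. lra.
Qed.

Lemma INR_list_sum (f : nat -> nat) l :
  INR (list_sum (map f l)) = Rsum (fun x => INR (f x)) l.
Proof. induction l as [|x l IH]; simpl; [|rewrite plus_INR, IH]; reflexivity. Qed.

Lemma Rsum_Rpower_le a M : a < 1 -> (1 <= M)%nat ->
  Rsum (fun j => Rpower (INR (S j)) (- a)) (seq 0 M) <= (1 + / (1 - a)) * Rpower (INR M) (1 - a).
Proof.
  intros Ha HM. assert (Hinv : 0 < / (1 - a)) by (apply Rinv_0_lt_compat; lra).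
  induction M as [|M IH]; [lia|].
  destruct (Nat.eq_dec M 0) as [->|HM0].
  - simpl. rewrite !Rpower_1_base. lra.
  - rewrite seq_S, Rsum_app. cbn [Rsum Nat.add]. rewrite !S_INR.
    assert (Hm : 0 < INR M) by (apply lt_0_INR; lia).
    pose proof (Rpower_step_le a (INR M) Ha Hm). specialize (IH ltac:(lia)). lra.
Qed.

Lemma INR_le_double m n : (m <= 2 * n)%nat -> INR m <= 2 * INR n.
Proof. intros H. apply le_INR in H. rewrite mult_INR in H. exact H. Qed.

(* If 2(j+1) <= M+1 then M/2 <= M-j <= 2M, otherwise M/2 <= j+1 <= 2M. *)
Lemma conv_term_le a b M j : (j < M)%nat ->
  Rpower (INR (S j)) (- a) * Rpower (INR (M - j)) (- b) <=
  Rpower 2 (Rabs b) * Rpower (INR M) (- b) * Rpower (INR (S j)) (- a) +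
  Rpower 2 (Rabs a) * Rpower (INR M) (- a) * Rpower (INR (M - j)) (- b).
Proof.
  intros Hj.
  pose proof (Rpower_pos (INR (S j)) (- a)). pose proof (Rpower_pos (INR (M - j)) (- b)).
  pose proof (Rpower_pos (INR M) (- a)). pose proof (Rpower_pos (INR M) (- b)).
  pose proof (Rpower_pos 2 (Rabs a)). pose proof (Rpower_pos 2 (Rabs b)).
  assert (HM : 0 < INR M) by (apply lt_0_INR; lia).
  assert (Hj1 : 0 < INR (S j)) by (apply lt_0_INR; lia).
  assert (HMj : 0 < INR (M - j)) by (apply lt_0_INR; lia).
  destruct (le_lt_dec (2 * S j) (M + 1)) as [Hc|Hc].
  - assert (Hb : Rpower (INR (M - j)) (- b) <= Rpower 2 (Rabs b) * Rpower (INR M) (- b)).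
    { rewrite <- (Rabs_Ropp b). apply Rpower_comparable; try assumption;
        apply INR_le_double; lia. }
    apply Rmult_le_compat_l with (r := Rpower (INR (S j)) (- a)) in Hb; [|lra].
    assert (0 < Rpower 2 (Rabs a) * Rpower (INR M) (- a) * Rpower (INR (M - j)) (- b))
      by (repeat apply Rmult_lt_0_compat; assumption).
    lra.
  - assert (Ha : Rpower (INR (S j)) (- a) <= Rpower 2 (Rabs a) * Rpower (INR M) (- a)).
    { rewrite <- (Rabs_Ropp a). apply Rpower_comparable; try assumption;
        apply INR_le_double; lia. }
    apply Rmult_le_compat_r with (r := Rpower (INR (M - j)) (- b)) in Ha; [|lra].
    assert (0 < Rpower 2 (Rabs b) * Rpower (INR M) (- b) * Rpower (INR (S j)) (- a))
      by (repeat apply Rmult_lt_0_compat; assumption).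
    lra.
Qed.

Lemma conv_Rpower_le a b : a < 1 -> b < 1 ->
  exists E, 0 < E /\ forall M, (1 <= M)%nat ->
    Rsum (fun j => Rpower (INR (S j)) (- a) * Rpower (INR (M - j)) (- b)) (seq 0 M) <=
    E * Rpower (INR M) (1 - a - b).
Proof.
  intros Ha Hb.
  set (ca := 1 + / (1 - a)). set (cb := 1 + / (1 - b)).
  set (Da := Rpower 2 (Rabs a)). set (Db := Rpower 2 (Rabs b)).
  assert (Hca : 0 < ca) by (pose proof (Rinv_0_lt_compat (1 - a)); unfold ca; lra).
  assert (Hcb : 0 < cb) by (pose proof (Rinv_0_lt_compat (1 - b)); unfold cb; lra).
  assert (HDa : 0 < Da) by apply Rpower_pos. assert (HDb : 0 < Db) by apply Rpower_pos.
  exists (Db * ca + Da * cb). split; [nra|]. intros M HM.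
  set (P := Rpower (INR M)).
  eapply Rle_trans.
  { apply Rsum_le. intros j Hj. apply in_seq in Hj. apply conv_term_le. lia. }
  rewrite Rsum_plus, !Rsum_scal, (Rsum_rev (fun n => Rpower (INR n) (- b))).
  pose proof (Rsum_Rpower_le a M Ha HM) as Sa. pose proof (Rsum_Rpower_le b M Hb HM) as Sb.
  fold ca cb P in Sa, Sb.
  assert (Hab : P (- b) * P (1 - a) = P (1 - a - b))
    by (unfold P; rewrite <- Rpower_plus; f_equal; ring).
  assert (Hba : P (- a) * P (1 - b) = P (1 - a - b))
    by (unfold P; rewrite <- Rpower_plus; f_equal; ring).
  assert (0 < P (- a)) by apply Rpower_pos. assert (0 < P (- b)) by apply Rpower_pos.
  apply Rle_trans with (Db * P (- b) * (ca * P (1 - a)) + Da * P (- a) * (cb * P (1 - b))).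
  - apply Rplus_le_compat; apply Rmult_le_compat_l; try assumption; nra.
  - right. rewrite Rmult_plus_distr_r, <- Hab at 1. rewrite <- Hba. ring.
Qed.

Lemma cnt_mono (S : nat -> bool) m n : (m <= n)%nat -> (cnt S m <= cnt S n)%nat.
Proof.
  intros H. unfold cnt. replace n with (m + (n - m))%nat by lia.
  rewrite seq_app, filter_app, length_app. lia.
Qed.

Lemma cnt_seq_le (S : nat -> bool) m n : (1 <= m)%nat ->
  (length (filter S (seq m n)) <= cnt S (m - 1 + n))%nat.
Proof.
  intros Hm. unfold cnt. rewrite seq_app, filter_app, length_app.
  replace (1 + (m - 1))%nat with m by lia. lia.
Qed.

Lemma cnt_filter_leb (S : nat -> bool) K N : (K <= N)%nat ->
  length (filter (fun b => S b && Nat.leb b K) (seq 1 N)) = cnt S K.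
Proof.
  intros HKN. unfold cnt. replace N with (K + (N - K))%nat by lia.
  rewrite seq_app, filter_app, length_app.
  rewrite (filter_ext_in _ (fun _ => false) (seq (1 + K) _)), filter_false.
  2:{ intros b Hb. apply in_seq in Hb. apply andb_false_intro2, Nat.leb_gt. lia. }
  rewrite (filter_ext_in _ S); [simpl; lia|].
  intros b Hb. apply in_seq in Hb. replace (Nat.leb b K) with true by (symmetry; apply Nat.leb_le; lia).
  apply andb_true_r.
Qed.

Definition pick_factor (A B : nat -> bool) (m : nat) : nat * nat :=
  hd (0, 0)%nat (filter (fun p => A (fst p) && B (snd p) && Nat.eqb (fst p * snd p) m)
                        (list_prod (seq 1 m) (seq 1 m))).

Lemma pick_factor_spec A B m : prodset A B m = true ->
  let (a, b) := pick_factor A B m in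
  A a = true /\ B b = true /\ (a * b = m)%nat /\ (1 <= a <= m)%nat /\ (1 <= b <= m)%nat.
Proof.
  unfold prodset. intros H. apply existsb_exists in H as [a [Ha H]].
  apply existsb_exists in H as [b [Hb H]].
  assert (Hin : In (pick_factor A B m)
     (filter (fun p => A (fst p) && B (snd p) && Nat.eqb (fst p * snd p) m)
             (list_prod (seq 1 m) (seq 1 m)))).
  { unfold pick_factor. destruct (filter _ _) as [|p l] eqn:E; [|left; reflexivity].
    assert (In (a, b) (@nil (nat * nat))); [|contradiction].
    rewrite <- E. apply filter_In. split; [apply in_prod|]; assumption. }
  destruct (pick_factor A B m) as [x y].
  apply filter_In in Hin as [Hxy Hp]. apply in_prod_iff in Hxy as [Hx Hy].
  apply in_seq in Hx, Hy. simpl in Hp.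
  apply andb_prop in Hp as [Hp Hm]. apply andb_prop in Hp as [HA HB].
  apply Nat.eqb_eq in Hm. repeat split; auto; lia.
Qed.

Lemma cnt_prodset_le_pairs A B N : (cnt (prodset A B) N <= pairs A B N)%nat.
Proof.
  unfold cnt, pairs. rewrite <- (length_map (pick_factor A B)).
  apply NoDup_incl_length.
  - apply NoDup_map_NoDup_ForallPairs; [|apply NoDup_filter, seq_NoDup].
    intros m m' Hm Hm' E. apply filter_In in Hm as [_ Hm]. apply filter_In in Hm' as [_ Hm'].
    pose proof (pick_factor_spec _ _ _ Hm) as Sm. pose proof (pick_factor_spec _ _ _ Hm') as Sm'.
    rewrite <- E in Sm'. destruct (pick_factor A B m). lia.
  - intros p Hp. apply in_map_iff in Hp as [m [<- Hm]].
    apply filter_In in Hm as [Hm Hpm]. apply in_seq in Hm.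
    pose proof (pick_factor_spec _ _ _ Hpm) as Sm.
    destruct (pick_factor A B m) as [a b]. destruct Sm as (HA & HB & Hab & Ha & Hb).
    apply filter_In. split.
    + apply in_prod; apply in_seq; nia.
    + simpl. rewrite HA, HB. apply Nat.leb_le. lia.
Qed.

Lemma length_filter_list_prod {T U} (P : T * U -> bool) l l' :
  length (filter P (list_prod l l')) =
  list_sum (map (fun a => length (filter (fun b => P (a, b)) l')) l).
Proof.
  induction l as [|a l IH]; simpl; [reflexivity|].
  rewrite filter_app, length_app, IH, filter_map_swap, length_map. reflexivity.
Qed.

Lemma pairs_eq A B N : pairs A B N =
  list_sum (map (fun a => if A a then cnt B (N / a) else 0%nat) (seq 1 N)).
Proof.
  unfold pairs. rewrite length_filter_list_prod. f_equal. apply map_ext_in.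
  intros a Ha. apply in_seq in Ha. simpl. destruct (A a); simpl.
  - rewrite <- (cnt_filter_leb B (N / a) N) by (apply Nat.Div0.div_le_upper_bound; nia).
    f_equal. apply filter_ext. intros b. f_equal.
    apply eq_true_iff_eq. rewrite !Nat.leb_le. split.
    + intros H. apply Nat.div_le_lower_bound; lia.
    + intros H. pose proof (Nat.Div0.mul_div_le N a). nia.
  - rewrite filter_false. reflexivity.
Qed.

Lemma list_sum_le {T} (f g : T -> nat) l : (forall x, In x l -> (f x <= g x)%nat) ->
  (list_sum (map f l) <= list_sum (map g l))%nat.
Proof.
  induction l as [|x l IH]; simpl; intros H; [lia|].
  pose proof (H x (or_introl eq_refl)). pose proof (IH (fun y Hy => H y (or_intror Hy))). lia.
Qed.

Lemma list_sum_indicator (P : nat -> bool) c l :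
  list_sum (map (fun a => if P a then c else 0%nat) l) = (c * length (filter P l))%nat.
Proof. induction l as [|x l IH]; simpl; [lia|]. destruct (P x); simpl; rewrite IH; lia. Qed.

Lemma list_sum_seq_dyadic (f : nat -> nat) K :
  list_sum (map f (seq 1 (2 ^ K - 1))) =
  list_sum (map (fun j => list_sum (map f (seq (2 ^ j) (2 ^ j)))) (seq 0 K)).
Proof.
  induction K as [|K IH]; [reflexivity|].
  pose proof (Nat.pow_nonzero 2 K ltac:(lia)).
  replace (2 ^ S K - 1)%nat with ((2 ^ K - 1) + 2 ^ K)%nat by (simpl; lia).
  rewrite seq_app, map_app, list_sum_app, IH, seq_S, map_app, list_sum_app.
  replace (1 + (2 ^ K - 1))%nat with (2 ^ K)%nat by lia. simpl. lia.
Qed.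

Lemma pairs_le_dyadic A B N M : (N < 2 ^ M)%nat ->
  (pairs A B N <= list_sum (map (fun j => cnt A (2 ^ S j) * cnt B (2 ^ (M - j))) (seq 0 M)))%nat.
Proof.
  intros HN. rewrite pairs_eq.
  set (g := fun a => if A a then cnt B (N / a) else 0%nat).
  apply Nat.le_trans with (list_sum (map g (seq 1 (2 ^ M - 1)))).
  { replace (2 ^ M - 1)%nat with (N + (2 ^ M - 1 - N))%nat by lia.
    rewrite seq_app, map_app, list_sum_app. lia. }
  rewrite list_sum_seq_dyadic. apply list_sum_le. intros j Hj. apply in_seq in Hj.
  pose proof (Nat.pow_nonzero 2 j ltac:(lia)).
  apply Nat.le_trans with
    (list_sum (map (fun a => if A a then cnt B (2 ^ (M - j)) else 0%nat) (seq (2 ^ j) (2 ^ j)))).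
  - apply list_sum_le. intros a Ha. apply in_seq in Ha. unfold g. destruct (A a); [|lia].
    apply cnt_mono, Nat.lt_le_incl, Nat.Div0.div_lt_upper_bound.
    apply Nat.lt_le_trans with (2 ^ M)%nat; [assumption|].
    replace M with (j + (M - j))%nat at 1 by lia. rewrite Nat.pow_add_r.
    apply Nat.mul_le_mono_r. lia.
  - rewrite list_sum_indicator, Nat.mul_comm. apply Nat.mul_le_mono_r.
    eapply Nat.le_trans; [apply cnt_seq_le; lia|]. apply cnt_mono. simpl. lia.
Qed.

Lemma fl_INR n : fl (INR n) = n.
Proof. unfold fl. rewrite Int_part_INR. apply Nat2Z.id. Qed.

Lemma fl_spec X : 0 <= X -> INR (fl X) <= X < INR (fl X) + 1.
Proof.
  intros HX. destruct (base_Int_part X) as [H1 H2].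
  assert (Hz : (-1 < Int_part X)%Z) by (apply lt_IZR; lra).
  unfold fl. rewrite INR_IZR_INZ, Z2Nat.id by lia. lra.
Qed.

Lemma eventually_le_uniform (f g : nat -> R) : (forall i, 0 < g i) ->
  forall i0 K, 0 < K -> (forall i, (i0 <= i)%nat -> f i <= K * g i) ->
  exists K', 0 < K' /\ forall i, f i <= K' * g i.
Proof.
  intros Hg i0. induction i0 as [|i0 IH]; intros K HK H.
  - exists K. split; [assumption|]. intros i. apply H. lia.
  - apply (IH (K + Rabs (f i0 / g i0))); [pose proof (Rabs_pos (f i0 / g i0)); lra|].
    intros i Hi. pose proof (Hg i). pose proof (Rabs_pos (f i0 / g i0)).
    destruct (Nat.eq_dec i i0) as [->|Hne].
    + pose proof (Rle_abs (f i0 / g i0)).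
      replace (f i0) with (f i0 / g i0 * g i0) at 1 by (field; lra). nra.
    + pose proof (H i ltac:(lia)). nra.
Qed.

(* At i = 0 the right-hand side uses the junk value [Rpower 0 _ = 1]. *)
Lemma dyadic_count_le a C (P : nat -> bool) : 0 < C ->
  (exists X0, forall X, X0 <= X -> INR (cntR P X) <= C * sqrt X / Rpower (ln X) a) ->
  exists K, 0 < K /\ forall i,
    INR (cnt P (2 ^ i)) <= K * sqrt (INR (2 ^ i)) * Rpower (INR i) (- a).
Proof.
  intros HC [X0 H].
  destruct (INR_archimed 1 X0 ltac:(lra)) as [n Hn]. rewrite Rmult_1_r in Hn.
  assert (Hln2 : 0 < ln 2) by (rewrite <- ln_1; apply ln_increasing; lra).
  assert (Hsqrt : forall i, 0 < sqrt (INR (2 ^ i))).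
  { intros i. apply sqrt_lt_R0, lt_0_INR. pose proof (Nat.pow_nonzero 2 i). lia. }
  destruct (eventually_le_uniform (fun i => INR (cnt P (2 ^ i)))
              (fun i => sqrt (INR (2 ^ i)) * Rpower (INR i) (- a)))
    with (i0 := S n) (K := C * Rpower (ln 2) (- a)) as [K [HK HKb]].
  - intros i. apply Rmult_lt_0_compat; [apply Hsqrt | apply Rpower_pos].
  - apply Rmult_lt_0_compat; [assumption | apply Rpower_pos].
  - intros i Hi.
    assert (Hi0 : 0 < INR i) by (apply lt_0_INR; lia).
    assert (HX : X0 <= INR (2 ^ i)).
    { pose proof (Nat.pow_gt_lin_r 2 i ltac:(lia)) as Hlin.
      apply lt_INR in Hlin. apply le_INR in Hi. rewrite S_INR in Hi. lra. }
    specialize (H _ HX). unfold cntR in H. rewrite fl_INR in H.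
    rewrite pow_INR in H |- *. replace (INR 2) with 2 in H |- * by (simpl; lra).
    rewrite ln_pow, <- Rpower_mult_distr in H by lra.
    eapply Rle_trans; [exact H|]. rewrite !Rpower_Ropp.
    right. field. split; apply Rgt_not_eq, Rpower_pos.
  - exists K. split; [assumption|]. intros i. rewrite Rmult_assoc. apply HKb.
Qed.

Lemma pairs_le_dyadic_scale a b KA KB (A B : nat -> bool) :
  a < 1 -> b < 1 -> 0 < KA -> 0 < KB ->
  (forall i, INR (cnt A (2 ^ i)) <= KA * sqrt (INR (2 ^ i)) * Rpower (INR i) (- a)) ->
  (forall i, INR (cnt B (2 ^ i)) <= KB * sqrt (INR (2 ^ i)) * Rpower (INR i) (- b)) ->
  exists K, 0 < K /\ forall N M, (N < 2 ^ M)%nat -> (1 <= M)%nat ->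
    INR (pairs A B N) <= K * sqrt (INR (2 ^ S M)) * Rpower (INR M) (1 - a - b).
Proof.
  intros Ha Hb HKA HKB HA HB.
  destruct (conv_Rpower_le a b Ha Hb) as [E [HE HEb]].
  exists (KA * KB * E). split; [apply Rmult_lt_0_compat; nra|]. intros N M HN HM.
  pose proof (pairs_le_dyadic A B N M HN) as Hp. apply le_INR in Hp.
  rewrite INR_list_sum in Hp. eapply Rle_trans; [exact Hp|].
  set (Q := sqrt (INR (2 ^ S M))).
  apply Rle_trans with (Rsum (fun j => KA * KB * Q *
    (Rpower (INR (S j)) (- a) * Rpower (INR (M - j)) (- b))) (seq 0 M)).
  - apply Rsum_le. intros j Hj. apply in_seq in Hj. rewrite mult_INR.
    replace Q with (sqrt (INR (2 ^ S j)) * sqrt (INR (2 ^ (M - j)))).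
    2:{ unfold Q. rewrite <- sqrt_mult, <- mult_INR, <- Nat.pow_add_r by apply pos_INR.
        f_equal. f_equal. f_equal. lia. }
    eapply Rle_trans.
    { apply Rmult_le_compat; [apply pos_INR | apply pos_INR | apply HA | apply HB]. }
    right. ring.
  - rewrite Rsum_scal. specialize (HEb M HM).
    assert (0 <= KA * KB * Q) by (apply Rmult_le_pos; [nra | apply sqrt_pos]).
    apply Rle_trans with (KA * KB * Q * (E * Rpower (INR M) (1 - a - b))).
    + apply Rmult_le_compat_l; assumption.
    + right. ring.
Qed.

Lemma log2_fl_bounds X : 1 <= X ->
  INR (2 ^ Nat.log2 (fl X)) <= X < INR (2 ^ S (Nat.log2 (fl X))).
Proof.
  intros HX. destruct (fl_spec X ltac:(lra)) as [H1 H2].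
  assert (HN : (0 < fl X)%nat) by (apply INR_lt; rewrite INR_0; lra).
  destruct (Nat.log2_spec _ HN) as [HL1 HL2].
  apply le_INR in HL1. apply le_INR in HL2. rewrite S_INR in HL2. lra.
Qed.

Lemma sqrt_pow2_log2_le X : 1 <= X ->
  sqrt (INR (2 ^ S (S (Nat.log2 (fl X))))) <= 2 * sqrt X.
Proof.
  intros HX. pose proof (log2_fl_bounds X HX) as [HL _].
  replace (2 * sqrt X) with (sqrt (4 * X)).
  - apply sqrt_le_1_alt.
    rewrite (Nat.pow_succ_r' 2 (S _)), Nat.pow_succ_r', !mult_INR.
    replace (INR 2) with 2 by (simpl; lra). lra.
  - rewrite sqrt_mult by lra. replace 4 with (2 * 2) by lra. rewrite sqrt_square; lra.
Qed.

Lemma Rpower_log2_le c X : 4 <= X ->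
  Rpower (INR (S (Nat.log2 (fl X)))) c <=
  Rpower 2 (Rabs c) * Rpower (/ ln 2) c * Rpower (ln X) c.
Proof.
  intros HX. pose proof (log2_fl_bounds X ltac:(lra)) as [HL1 HL2].
  set (L := Nat.log2 (fl X)) in *.
  assert (Hln2 : 0 < ln 2) by (rewrite <- ln_1; apply ln_increasing; lra).
  assert (HlnX : 0 < ln X) by (rewrite <- ln_1; apply ln_increasing; lra).
  rewrite !pow_INR in HL1, HL2. replace (INR 2) with 2 in HL1, HL2 by (simpl; lra).
  assert (HL : 1 <= INR L).
  { destruct (Nat.eq_dec L 0) as [E|E]; [rewrite E in HL2; simpl in HL2; lra|].
    apply (le_INR 1). lia. }
  assert (Hlow : INR L * ln 2 <= ln X)
    by (rewrite <- ln_pow by lra; apply ln_le; [apply pow_lt|]; lra).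
  assert (Hup : ln X <= INR (S L) * ln 2)
    by (rewrite <- ln_pow by lra; apply ln_le; lra).
  rewrite S_INR in Hup |- *.
  set (y := ln X * / ln 2).
  assert (Hy : INR L <= y <= INR L + 1).
  { unfold y. split.
    - apply (Rmult_le_reg_r (ln 2)); [lra|]. field_simplify; lra.
    - apply (Rmult_le_reg_r (ln 2)); [lra|]. field_simplify; lra. }
  eapply Rle_trans; [apply (Rpower_comparable _ y c); lra|].
  unfold y. rewrite <- Rpower_mult_distr by (try apply Rinv_0_lt_compat; lra).
  right. ring.
Qed.

Theorem lemma2p1 (alpha beta C : R) (A B : nat -> bool) :
  alpha < 1 -> beta < 1 -> 0 < C ->
  A 0%nat = false -> B 0%nat = false ->
  (exists X0, forall X, X0 <= X ->
     INR (cntR A X) <= C * sqrt X / Rpower (ln X) alpha) ->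
  (exists X0, forall X, X0 <= X ->
     INR (cntR B X) <= C * sqrt X / Rpower (ln X) beta) ->
  exists C', 0 < C' /\
    exists X0, forall X, X0 <= X ->
      INR (cntR (prodset A B) X) <= INR (pairsR A B X) /\
      INR (pairsR A B X) <= C' * sqrt X * Rpower (ln X) (1 - alpha - beta).
Proof.
  intros Ha Hb HC _ _ hA hB.
  destruct (dyadic_count_le alpha C A HC hA) as [KA [HKA HA]].
  destruct (dyadic_count_le beta C B HC hB) as [KB [HKB HB]].
  destruct (pairs_le_dyadic_scale alpha beta KA KB A B Ha Hb HKA HKB HA HB) as [K [HK HKb]].
  set (g := 1 - alpha - beta).
  set (D := Rpower 2 (Rabs g) * Rpower (/ ln 2) g).
  assert (HD : 0 < D) by (apply Rmult_lt_0_compat; apply Rpower_pos).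
  exists (2 * K * D). split; [nra|].
  exists 4. intros X HX. split.
  { apply le_INR, cnt_prodset_le_pairs. }
  set (L := Nat.log2 (fl X)).
  assert (HN : (fl X < 2 ^ S L)%nat).
  { apply Nat.log2_spec, INR_lt. rewrite INR_0. pose proof (fl_spec X ltac:(lra)). lra. }
  eapply Rle_trans; [apply (HKb (fl X) (S L) HN); lia|].
  pose proof (sqrt_pow2_log2_le X ltac:(lra)) as Hsqrt.
  pose proof (Rpower_log2_le g X HX) as Hpow. fold L D in Hsqrt, Hpow.
  apply Rle_trans with (K * (2 * sqrt X) * (D * Rpower (ln X) g)); [|right; ring].
  apply Rmult_le_compat; [| apply Rlt_le, Rpower_pos | | assumption].
  - apply Rmult_le_pos; [lra | apply sqrt_pos].
  - apply Rmult_le_compat_l; [lra | assumption].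
Qed.
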